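(* Let $a,c,d\in\mathbb{Q}$ with $a,c,d\neq 0$, let $f(t)=t^4+ct+d$, and for $t\in\mathbb{Q}$ with $f(t)\ne0$ let $E^{f(t)}$ be the elliptic curve $f(t)y^2=x^3+ax$ over $\mathbb{Q}$. Then infinitely many fibres $E^{f(t)}$, $t\in\mathbb{Q}$, have positive rank. More precisely, there is a set $W\subset\mathbb{Q}$, which is dense in the half-interval $(-d/c,\infty)$ if $ac>0$, respectively dense in $(-\infty,-d/c)$ if $ac<0$, such that $E^{f(t)}$ has positive Mordell–Weil rank over $\mathbb{Q}$ for all $t\in W$. *)

From mathcomp Require Import all_boot all_order all_algebra.
Set Implicit Arguments. Unset Strict Implicit. Unset Printing Implicit Defensive.
Import Order.TTheory GRing.Theory Num.Theory.
Local Open Scope ring_scope.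

(* Rational points of the curve  F y^2 = x^3 + a x  (F, a <> 0):
   [None] is the point at infinity O, [Some (x,y)] an affine point. *)
Definition pt := option (rat * rat).

Definition on_curve (F a : rat) (P : pt) : Prop :=
  match P with
  | None => True
  | Some (x, y) => F * y ^+ 2 = x ^+ 3 + a * x
  end.

(* A line y = y1 + l (x - x1) meets the cubic in three points whose
   x-coordinates sum to F l^2; the sum is the reflection (x,y) |-> (x,-y)
   of the third intersection point. *)
Definition add_pt (F a : rat) (P Q : pt) : pt :=
  match P, Q with
  | None, _ => Q
  | _, None => P
  | Some (x1, y1), Some (x2, y2) =>
      if x1 == x2 then
        if y1 + y2 == 0 then None
        else
          let l := (3 * x1 ^+ 2 + a) / (2 * F * y1) in
          let x3 := F * l ^+ 2 - 2 * x1 in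
          Some (x3, - (y1 + l * (x3 - x1)))
      else
        let l := (y2 - y1) / (x2 - x1) in
        let x3 := F * l ^+ 2 - x1 - x2 in
        Some (x3, - (y1 + l * (x3 - x1)))
  end.

Fixpoint mul_pt (F a : rat) (n : nat) (P : pt) : pt :=
  match n with
  | O => None
  | S m => add_pt F a P (mul_pt F a m P)
  end.

(* The Mordell-Weil group E(Q) of  F y^2 = x^3 + a x  has positive rank
   iff it is not torsion, i.e. it has a rational point of infinite order. *)
Definition positive_rank (F a : rat) : Prop :=
  exists P : pt, on_curve F a P /\ forall n : nat, (0 < n)%N -> mul_pt F a n P <> None.

Definition fpoly (c d t : rat) : rat := t ^+ 4 + c * t + d.

(* W is dense in the open interval (lo, hi) (hi = None means +oo,
   lo = None means -oo): every nonempty open subinterval meets W. *)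
Definition dense_in (W : rat -> Prop) (lo hi : option rat) : Prop :=
  forall u v : rat, u < v ->
    (match lo with Some l => is_true (l <= u) | None => True end) ->
    (match hi with Some h => is_true (v <= h) | None => True end) ->
    exists t, W t /\ u < t /\ t < v.

(* Put t = (a g^4 - d)/c, so that c t + d = a g^4, f(t) = t^4 + a g^4 and
   P = (t^2/g^2, t/g^3) lies on f(t) y^2 = x^3 + a x.  For rho <> 0 the
   coordinates T = x/(rho y), S = F/(rho^3 y) turn F y^2 = x^3 + a x into
   S = T^3 + b T S^2 with b = a rho^4/F^2.  If b/2 lies in Z_(2), the chord
   through two points with T, S in Z_(2) has slope al in Z_(2), and Vieta on
   that line gives T(Q1 + Q2) = T1 + T2 + 2 b al be/(1 + b al^2): such points
   are stable under addition (unless the sum is O), with T additive mod 2.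
   For rho = t g one has T(P) = 1, hence T(mP) = m mod 2.  If N P = O with N
   minimal, then (N-1)P = -P has T = -1, so N is even, and (N/2)P = -(N/2)P
   would have y = 0, which such points never have.  Choosing g = M n with n of
   odd denominator and M clearing the denominators of a/d and a c^4/d^4 makes
   b/2 2-integral, and t = (a M^4/c) n^4 - d/c is dense on the side of -d/c
   given by the sign of a c. *)

From HB Require Import structures.
From mathcomp Require Import all_boot all_order all_algebra.
From mathcomp Require Import ring lra zify.
Import Order.TTheory GRing.Theory Num.Theory.
Local Open Scope ring_scope.

Definition Z2 : {pred rat} := fun r => odd `|denq r|.

Lemma odd_intr_neq0 {d : int} : odd `|d| -> d%:~R != 0 :> rat.
Proof. by rewrite intr_eq0; apply: contraTneq => ->. Qed.

Lemma Z2P (r : rat) :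
  reflect (exists n d : int, odd `|d| /\ r = n%:~R / d%:~R) (r \in Z2).
Proof.
apply: (iffP idP) => [Zr | [n [d [odd_d ->]]]].
  by exists (numq r), (denq r); rewrite divq_num_den.
have d0 : d != 0 by apply: contraTneq odd_d => ->.
rewrite unfold_in; move: d0 odd_d; case: divqP => [_|k x _ _ /=]; first by rewrite eqxx.
by rewrite abszM oddM => /andP[].
Qed.

Fact Z2_subring_closed : subring_closed Z2.
Proof.
split; first by rewrite unfold_in.
- move=> _ _ /Z2P[n1 [d1 [h1 ->]]] /Z2P[n2 [d2 [h2 ->]]].
  apply/Z2P; exists (n1 * d2 - n2 * d1), (d1 * d2).
  split; first by rewrite abszM oddM h1 h2.
  have := odd_intr_neq0 h1; have := odd_intr_neq0 h2 => e2 e1.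
  by rewrite rmorphB !rmorphM /=; field; apply/andP.
- move=> _ _ /Z2P[n1 [d1 [h1 ->]]] /Z2P[n2 [d2 [h2 ->]]].
  apply/Z2P; exists (n1 * n2), (d1 * d2); split; first by rewrite abszM oddM h1 h2.
  have := odd_intr_neq0 h1; have := odd_intr_neq0 h2 => e2 e1.
  by rewrite !rmorphM /=; field; apply/andP.
Qed.

HB.instance Definition _ := GRing.isSubringClosed.Build rat Z2 Z2_subring_closed.

(* After an [rpred] lemma the goal mentions a closure structure instead of
   [Z2]; the [change] restores [Z2] so that assumptions match.  Lemmas are
   selected syntactically: unifying, e.g., [rpredB] with a numeral of [rat]
   unfolds rational arithmetic and can take minutes. *)
Ltac Z2_closure :=
  repeat (try lazymatch goal with |- is_true (?x \in _) => change (x \in Z2) end;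
          first [ assumption
                | lazymatch goal with
                  | |- is_true (_ - _ \in _) => apply: rpredB
                  | |- is_true (_ + _ \in _) => apply: rpredD
                  | |- is_true (_ * _ \in _) => apply: rpredM
                  | |- is_true (- _ \in _) => apply: rpredNr
                  | |- is_true (_ ^+ _ \in _) => apply: rpredX
                  | |- is_true (_%:R \in _) => apply: rpred_nat
                  | |- is_true (_%:~R \in _) => apply: rpred_int
                  | |- is_true (0 \in _) => apply: rpred0
                  | |- is_true (1 \in _) => apply: rpred1
                  end ]).

Lemma Z2_of_half {r : rat} : r / 2 \in Z2 -> r \in Z2.
Proof. by move=> Zr; rewrite -[r](@divfK _ 2) //; Z2_closure. Qed.

Lemma Z2_unit (u m : rat) : m \in Z2 -> u = 1 + 2 * m -> u != 0 /\ u^-1 \in Z2.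
Proof.
move=> /Z2P[n [d [odd_d ->]]] ->.
have odd_d' : odd `|d + 2 * n| by lia.
have -> : 1 + 2 * (n%:~R / d%:~R) = (d + 2 * n)%:~R / d%:~R :> rat.
  by rewrite rmorphD rmorphM /=; field; apply: odd_intr_neq0.
rewrite invf_div; split; first by rewrite mulf_neq0 ?invr_eq0 ?odd_intr_neq0.
by apply/Z2P; exists d, (d + 2 * n).
Qed.

Lemma Z2_mul_denq (r : rat) : r * (denq r)%:~R \in Z2.
Proof. by rewrite -numqE rpred_int. Qed.

Lemma half_nat_Z2 (N : nat) : N%:R / 2 \in Z2 -> ~~ odd N.
Proof.
case/Z2P=> [n [d [odd_d E]]].
have /intr_inj/(congr1 absz) : (N%:Z * d)%:~R = (n * 2)%:~R :> rat.
  rewrite !rmorphM /= -[n%:~R](divfK (odd_intr_neq0 odd_d)) -E.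
  by rewrite [RHS]mulrAC mulrC divfK // mulrC.
by rewrite !abszM /= => /(congr1 odd); rewrite !oddM odd_d andbT andbF => ->.
Qed.

Section ChordTangent.
Context {F a : rat}.
Hypothesis F0 : F != 0.

Definition neg_pt (P : pt) : pt := if P is Some (x, y) then Some (x, - y) else None.

Lemma neg_ptK : involutive neg_pt.
Proof. by case=> [[x y]|] //=; rewrite opprK. Qed.

Lemma on_curve_same_x {x u v : rat} : F * u ^+ 2 = x ^+ 3 + a * x ->
  F * v ^+ 2 = x ^+ 3 + a * x -> v = u \/ v = - u.
Proof.
move=> hu hv; have /(mulfI F0)/eqP : F * v ^+ 2 = F * u ^+ 2 by rewrite hu hv.
by rewrite eqf_sqr => /orP[/eqP|/eqP]; [left|right].
Qed.

Lemma on_curve_x_neq0 {x y : rat} : y != 0 -> F * y ^+ 2 = x ^+ 3 + a * x -> x != 0.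
Proof.
move=> y0 h; apply/eqP => x0.
have /eqP : F * y ^+ 2 = 0 by rewrite h x0; ring.
by rewrite mulf_eq0 (negbTE F0) sqrf_eq0 (negbTE y0).
Qed.

Lemma on_curve_tangent (x y : rat) : y != 0 -> F * y ^+ 2 = x ^+ 3 + a * x ->
  let l := (3 * x ^+ 2 + a) / (2 * F * y) in
  let x3 := F * l ^+ 2 - 2 * x in
  F * (- (y + l * (x3 - x))) ^+ 2 = x3 ^+ 3 + a * x3.
Proof.
move=> y0 h l x3.
have hl : 2 * F * l * y = 3 * x ^+ 2 + a by rewrite /l; field; rewrite F0 y0.
apply/eqP; rewrite -subr_eq0; apply/eqP.
have -> : F * (- (y + l * (x3 - x))) ^+ 2 - (x3 ^+ 3 + a * x3) =
  (F * y ^+ 2 - x ^+ 3 - a * x) + (x3 - x) * (2 * F * l * y - 3 * x ^+ 2 - a).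
  by rewrite /x3; ring.
by rewrite hl h; ring.
Qed.

Lemma on_curve_chord (x1 y1 x2 y2 : rat) : x1 != x2 ->
  F * y1 ^+ 2 = x1 ^+ 3 + a * x1 -> F * y2 ^+ 2 = x2 ^+ 3 + a * x2 ->
  let l := (y2 - y1) / (x2 - x1) in
  let x3 := F * l ^+ 2 - x1 - x2 in
  F * (- (y1 + l * (x3 - x1))) ^+ 2 = x3 ^+ 3 + a * x3.
Proof.
move=> x12 h1 h2 l x3.
have n21 : x2 - x1 != 0 by rewrite subr_eq0 eq_sym.
have hy : y1 + l * (x2 - x1) = y2 by rewrite /l; field.
apply/eqP; rewrite -subr_eq0 -(mulIr_eq0 _ (mulIf n21)); apply/eqP.
have -> : (F * (- (y1 + l * (x3 - x1))) ^+ 2 - (x3 ^+ 3 + a * x3)) * (x2 - x1) =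
   (F * y1 ^+ 2 - x1 ^+ 3 - a * x1) * (x2 - x3) +
   (F * (y1 + l * (x2 - x1)) ^+ 2 - x2 ^+ 3 - a * x2) * (x3 - x1).
  by rewrite /x3; ring.
by rewrite hy h1 h2; ring.
Qed.

Lemma on_curve_add (P Q : pt) : on_curve F a P -> on_curve F a Q ->
  on_curve F a (add_pt F a P Q).
Proof.
case: P Q => [[x1 y1]|] [[x2 y2]|] //= h1 h2.
case: eqP => [ex | /eqP nx]; last exact: on_curve_chord.
case: eqP => [//| y12]; subst x2.
apply: on_curve_tangent => //; apply/eqP => y0; apply: y12.
by case: (on_curve_same_x h1 h2) => ->; rewrite y0 ?oppr0 addr0.
Qed.

Lemma on_curve_mul (n : nat) {P : pt} : on_curve F a P -> on_curve F a (mul_pt F a n P).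
Proof. by move=> hP; elim: n => [|n IHn] //=; apply: on_curve_add. Qed.

Lemma add_pt_eq_None {P Q : pt} : add_pt F a P Q = None -> Q = neg_pt P.
Proof.
case: P Q => [[x1 y1]|] [[x2 y2]|] //=.
case: eqP => [<-|_]; last by [].
by case: eqP => [/eqP|//]; rewrite addrC addr_eq0 => /eqP ->.
Qed.

Lemma secant_tangent {xp yp xx yx l : rat} : xx != xp ->
  F * yp ^+ 2 = xp ^+ 3 + a * xp -> F * yx ^+ 2 = xx ^+ 3 + a * xx ->
  yx = yp + l * (xx - xp) -> F * l ^+ 2 = 2 * xp + xx ->
  2 * F * l * yp = 3 * xp ^+ 2 + a.
Proof.
move=> nx hp hx eyx hl.
have ndx : xx - xp != 0 by rewrite subr_eq0.
have hA : F * l * (yx + yp) = xx ^+ 2 + xx * xp + xp ^+ 2 + a.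
  apply: (mulIf ndx).
  have -> : F * l * (yx + yp) * (xx - xp) = F * yx ^+ 2 - F * yp ^+ 2.
    by rewrite eyx; ring.
  by rewrite hx hp; ring.
have -> : 2 * F * l * yp = F * l * (yx + yp) - F * l ^+ 2 * (xx - xp).
  by rewrite eyx; ring.
by rewrite hA hl; ring.
Qed.

Lemma add_pt_secant {xp yp xx yx xz w : rat} :
  F * yp ^+ 2 = xp ^+ 3 + a * xp -> F * yx ^+ 2 = xx ^+ 3 + a * xx ->
  add_pt F a (Some (xp, yp)) (Some (xx, yx)) = Some (xz, w) ->
  exists l, [/\ yx = yp + l * (xx - xp), xp + xx + xz = F * l ^+ 2,
    w = - (yp + l * (xz - xp)) & xx = xp \/ xz = xp -> 2 * F * l * yp = 3 * xp ^+ 2 + a].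
Proof.
move=> hp + /=; case: eqP => [<- hx | /eqP nx hx].
  case: eqP => [//| nzy] [<- <-].
  have eyx : yx = yp by case: (on_curve_same_x hp hx) => // e; case: nzy; rewrite e subrr.
  have yp0 : yp != 0 by apply/eqP => y0; apply: nzy; rewrite eyx y0 addr0.
  exists ((3 * xp ^+ 2 + a) / (2 * F * yp)); split => //.
  - by rewrite eyx subrr mulr0 addr0.
  - by ring.
  - by move=> _; field; rewrite F0 yp0.
have ndx : xx - xp != 0 by rewrite subr_eq0 eq_sym.
case=> <- <-; exists ((yx - yp) / (xx - xp)); split => //.
- by field.
- by ring.
case=> [/eqP|ez]; first by rewrite eq_sym (negbTE nx).
apply: (secant_tangent _ hp hx); first by rewrite eq_sym.
  by field.
by move: ez; lra.
Qed.

Lemma add_pt_of_secant {xp yp xq yq xr l : rat} : yp != 0 ->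
  yq = yp + l * (xq - xp) -> xp + xq + xr = F * l ^+ 2 ->
  (xq = xp -> 2 * F * l * yp = 3 * xp ^+ 2 + a) ->
  add_pt F a (Some (xp, yp)) (Some (xq, yq)) = Some (xr, - (yp + l * (xr - xp))).
Proof.
move=> yp0 eyq hsum htan /=; case: eqP => [exq | /eqP nx].
  have -> : yp + yq == 0 = false.
    by rewrite eyq -exq subrr mulr0 addr0 -mulr2n mulrn_eq0 (negbTE yp0).
  have -> : (3 * xp ^+ 2 + a) / (2 * F * yp) = l.
    by rewrite -htan //; field; rewrite F0 yp0.
  by have -> : xr = F * l ^+ 2 - 2 * xp by rewrite -hsum -exq; ring.
have ndx : xq - xp != 0 by rewrite subr_eq0 eq_sym.
have -> : (yq - yp) / (xq - xp) = l by rewrite eyq; field.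
by have -> : xr = F * l ^+ 2 - xp - xq by rewrite -hsum; ring.
Qed.

Lemma add_pt_neg_swap {xp yp : rat} {X Z : pt} : yp != 0 ->
  on_curve F a (Some (xp, yp)) -> on_curve F a X ->
  add_pt F a (Some (xp, yp)) X = neg_pt Z -> add_pt F a (Some (xp, yp)) Z = neg_pt X.
Proof.
move=> yp0 hp hX hE.
case: X hX hE => [[xx yx]|] hX hE; last first.
  by case: Z hE => [[xz yz]|] //= [<- ->]; rewrite eqxx addNr eqxx.
case: Z hE => [[xz yz]|] hE; last by case: (add_pt_eq_None hE) => -> ->; rewrite /= opprK.
have [l [eyx hsum eyz htan]] := add_pt_secant hp hX hE.
rewrite (add_pt_of_secant (xr := xx) (l := l) yp0) /=.
- by rewrite eyx.
- by apply: oppr_inj.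
- by rewrite -hsum; ring.
- by move=> ?; apply: htan; right.
Qed.

Lemma mul_pt_neg_sym {xp yp : rat} {N j : nat} : yp != 0 ->
  on_curve F a (Some (xp, yp)) -> mul_pt F a N (Some (xp, yp)) = None -> (j <= N)%N ->
  mul_pt F a (N - j) (Some (xp, yp)) = neg_pt (mul_pt F a j (Some (xp, yp))).
Proof.
move=> yp0 hP hN; elim: j => [_|j IHj ltjN]; first by rewrite subn0 hN.
have := IHj (ltnW ltjN); rewrite -(subnSK ltjN) => hE.
by rewrite -[LHS]neg_ptK -(add_pt_neg_swap yp0 hP (on_curve_mul _ hP) hE).
Qed.

End ChordTangent.

Lemma model_secant_Z2 {b T1 S1 T2 S2 : rat} : b / 2 \in Z2 ->
  T1 \in Z2 -> S1 \in Z2 -> T2 \in Z2 -> S2 \in Z2 ->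
  S1 = T1 ^+ 3 + b * T1 * S1 ^+ 2 -> S2 = T2 ^+ 3 + b * T2 * S2 ^+ 2 ->
  exists2 u, u \in Z2 & S2 - S1 = u * (T2 - T1).
Proof.
move=> b2 ZT1 ZS1 ZT2 ZS2 e1 e2.
set U := 1 - b * T1 * (S1 + S2).
have [U0 ZU] : U != 0 /\ U^-1 \in Z2.
  by apply: (Z2_unit _ (- (b / 2 * T1 * (S1 + S2)))); [Z2_closure | rewrite /U; field].
have Zb := Z2_of_half b2.
exists ((T1 ^+ 2 + T1 * T2 + T2 ^+ 2 + b * S2 ^+ 2) / U); first by Z2_closure.
apply: (mulIf U0); rewrite mulrAC divfK //.
apply/eqP; rewrite -subr_eq0; apply/eqP.
have -> : (S2 - S1) * U - (T1 ^+ 2 + T1 * T2 + T2 ^+ 2 + b * S2 ^+ 2) * (T2 - T1) =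
  (S2 - (T2 ^+ 3 + b * T2 * S2 ^+ 2)) - (S1 - (T1 ^+ 3 + b * T1 * S1 ^+ 2)).
  by rewrite /U; ring.
by rewrite -e1 -e2 !subrr.
Qed.

Definition tcoord (rho : rat) (P : pt) : rat :=
  if P is Some (x, y) then x / (rho * y) else 0.

Definition scoord (F rho : rat) (P : pt) : rat :=
  if P is Some (_, y) then F / (rho ^+ 3 * y) else 0.

Definition Z2_pt (F rho : rat) (P : pt) : bool :=
  if P is Some (_, y) then [&& y != 0, tcoord rho P \in Z2 & scoord F rho P \in Z2]
  else false.

Section FormalCoordinates.
Context {F a rho : rat}.
Hypotheses (F0 : F != 0) (rho0 : rho != 0).
Local Notation b := (a * rho ^+ 4 / F ^+ 2).

Lemma scoord_model {x y : rat} : y != 0 -> F * y ^+ 2 = x ^+ 3 + a * x ->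
  F / (rho ^+ 3 * y) =
    (x / (rho * y)) ^+ 3 + b * (x / (rho * y)) * (F / (rho ^+ 3 * y)) ^+ 2.
Proof.
move=> y0 h; apply/eqP; rewrite -subr_eq0; apply/eqP.
have -> : F / (rho ^+ 3 * y) - ((x / (rho * y)) ^+ 3 +
    b * (x / (rho * y)) * (F / (rho ^+ 3 * y)) ^+ 2) =
  (F * y ^+ 2 - (x ^+ 3 + a * x)) / (rho ^+ 3 * y ^+ 3).
  by field; rewrite F0 rho0 y0.
by rewrite h subrr mul0r.
Qed.

Lemma formal_coords_inj {x1 y1 x2 y2 : rat} : y1 != 0 -> y2 != 0 ->
  x1 / (rho * y1) = x2 / (rho * y2) -> F / (rho ^+ 3 * y1) = F / (rho ^+ 3 * y2) -> x1 = x2.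
Proof.
move=> y10 y20 eT eS.
have ey : y1 = y2.
  have -> : y1 = F / (rho ^+ 3 * (F / (rho ^+ 3 * y1))) by field; rewrite F0 rho0 y10.
  by rewrite eS; field; rewrite F0 rho0 y20.
rewrite -(divfK (mulf_neq0 rho0 y10) x1) -(divfK (mulf_neq0 rho0 y20) x2).
by rewrite eT ey.
Qed.

Lemma tangent_formal {x y : rat} : y != 0 -> F * y ^+ 2 = x ^+ 3 + a * x ->
  let l := (3 * x ^+ 2 + a) / (2 * F * y) in
  let x3 := F * l ^+ 2 - 2 * x in let y3 := - (y + l * (x3 - x)) in
  let T := x / (rho * y) in let S := F / (rho ^+ 3 * y) in
  let al := (3 * T ^+ 2 + b * S ^+ 2) / (1 - 2 * b * T * S) in
  let be := S - al * T in let D := 1 + b * al ^+ 2 in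
  1 - 2 * b * T * S != 0 ->
  x3 * D = rho * y3 * ((T + T) * D + 2 * b * al * be) /\
  y3 * (al * ((T + T) * D + 2 * b * al * be) - be * D) = F * D / rho ^+ 3.
Proof.
move=> y0 h; have x0 := on_curve_x_neq0 F0 y0 h.
have h3 : x ^+ 3 + a * x != 0 by rewrite -h mulf_neq0 ?sqrf_eq0.
have hF : F = (x ^+ 3 + a * x) / y ^+ 2 by rewrite -h mulfK ?sqrf_eq0.
(* Eliminating F via the curve equation leaves rational-function identities. *)
cbv zeta; rewrite hF => E0.
have h4 : x ^+ 3 + a * x - 2 * a * x != 0.
  apply: contra E0 => /eqP h0; apply/eqP.
  have -> : 1 - 2 * (a * rho ^+ 4 / ((x ^+ 3 + a * x) / y ^+ 2) ^+ 2) * (x / (rho * y)) *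
    ((x ^+ 3 + a * x) / y ^+ 2 / (rho ^+ 3 * y)) =
    (x ^+ 3 + a * x - 2 * a * x) / (x ^+ 3 + a * x).
    by field; rewrite ?x0 ?y0 ?rho0 ?h3.
  by rewrite h0 mul0r.
by split; field; rewrite ?x0 ?y0 ?rho0 ?h3 ?h4.
Qed.

Lemma chord_formal {x1 y1 x2 y2 : rat} : y1 != 0 -> y2 != 0 ->
  x1 != x2 -> x1 / (rho * y1) != x2 / (rho * y2) ->
  F * y1 ^+ 2 = x1 ^+ 3 + a * x1 -> F * y2 ^+ 2 = x2 ^+ 3 + a * x2 ->
  let l := (y2 - y1) / (x2 - x1) in
  let x3 := F * l ^+ 2 - x1 - x2 in let y3 := - (y1 + l * (x3 - x1)) in
  let T1 := x1 / (rho * y1) in let T2 := x2 / (rho * y2) in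
  let S1 := F / (rho ^+ 3 * y1) in let S2 := F / (rho ^+ 3 * y2) in
  let al := (S2 - S1) / (T2 - T1) in let be := S1 - al * T1 in
  let D := 1 + b * al ^+ 2 in
  x3 * D = rho * y3 * ((T1 + T2) * D + 2 * b * al * be) /\
  y3 * (al * ((T1 + T2) * D + 2 * b * al * be) - be * D) = F * D / rho ^+ 3.
Proof.
move=> y10 y20 nx nT h1 h2.
have x10 := on_curve_x_neq0 F0 y10 h1; have x20 := on_curve_x_neq0 F0 y20 h2.
have n21 : x2 - x1 != 0 by rewrite subr_eq0 eq_sym.
have nxy : x2 * y1 - x1 * y2 != 0.
  apply: contra nT => /eqP e; rewrite -subr_eq0.
  have -> : x1 / (rho * y1) - x2 / (rho * y2) = - (x2 * y1 - x1 * y2) / (rho * y1 * y2).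
    by field; rewrite rho0 y10 y20.
  by rewrite e oppr0 mul0r.
have eF : F * (x1 * y2 ^+ 2 - x2 * y1 ^+ 2) = x1 * x2 ^+ 3 - x1 ^+ 3 * x2.
  by rewrite mulrBr !mulrA ![F * _]mulrC -!mulrA h1 h2; ring.
have ea : a * (x1 * y2 ^+ 2 - x2 * y1 ^+ 2) = y1 ^+ 2 * x2 ^+ 3 - y2 ^+ 2 * x1 ^+ 3.
  have -> : x1 ^+ 3 = F * y1 ^+ 2 - a * x1 by rewrite h1; ring.
  have -> : x2 ^+ 3 = F * y2 ^+ 2 - a * x2 by rewrite h2; ring.
  by ring.
have det0 : x1 * y2 ^+ 2 - x2 * y1 ^+ 2 != 0.
  apply/eqP => d0; move/eqP: eF; rewrite d0 mulr0 eq_sym.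
  have -> : x1 * x2 ^+ 3 - x1 ^+ 3 * x2 = x1 * x2 * (x2 - x1) * (x2 + x1) by ring.
  rewrite !mulf_eq0 (negbTE x10) (negbTE x20) (negbTE n21) /= addr_eq0 => /eqP ex.
  move/eqP: d0; rewrite ex mulNr opprK -mulrDr mulf_eq0 (negbTE x10) /=.
  by rewrite paddr_eq0 ?sqr_ge0 // !sqrf_eq0 (negbTE y10) andbF.
have Fn0 : x1 * x2 ^+ 3 - x1 ^+ 3 * x2 != 0 by rewrite -eF mulf_neq0.
have hF : F = (x1 * x2 ^+ 3 - x1 ^+ 3 * x2) / (x1 * y2 ^+ 2 - x2 * y1 ^+ 2).
  by rewrite -eF mulfK.
have ha : a = (y1 ^+ 2 * x2 ^+ 3 - y2 ^+ 2 * x1 ^+ 3) / (x1 * y2 ^+ 2 - x2 * y1 ^+ 2).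
  by rewrite -ea mulfK.
(* F and a are determined by the two points. *)
cbv zeta; rewrite hF ha.
by split; field; rewrite ?mulNr ?x10 ?x20 ?y10 ?y20 ?rho0 ?n21 ?nxy ?det0 ?Fn0.
Qed.

Lemma formal_third_pt {x3 y3 T1 T2 al be : rat} : b / 2 \in Z2 ->
  T1 \in Z2 -> T2 \in Z2 -> al \in Z2 -> be \in Z2 ->
  let D := 1 + b * al ^+ 2 in let K := (T1 + T2) * D + 2 * b * al * be in
  x3 * D = rho * y3 * K -> y3 * (al * K - be * D) = F * D / rho ^+ 3 ->
  Z2_pt F rho (Some (x3, y3)) /\ (tcoord rho (Some (x3, y3)) - T1 - T2) / 2 \in Z2.
Proof.
move=> b2 ZT1 ZT2 Zal Zbe D K I1 I2; have Zb := Z2_of_half b2.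
have [D0 ZD] : D != 0 /\ D^-1 \in Z2.
  by apply: (Z2_unit _ (b / 2 * al ^+ 2)); [Z2_closure | rewrite /D; field].
have y30 : y3 != 0.
  apply/eqP => y0; move/eqP: I2; rewrite y0 mul0r eq_sym.
  by rewrite !mulf_eq0 invr_eq0 expf_eq0 (negbTE F0) (negbTE D0) (negbTE rho0) andbF.
have eT : x3 / (rho * y3) = K / D.
  by apply/eqP; rewrite eqr_div ?mulf_neq0 // I1 mulrC mulrA.
have eS : F / (rho ^+ 3 * y3) = al * K / D - be.
  have -> : F = y3 * (al * K - be * D) * rho ^+ 3 / D by rewrite I2; field; rewrite rho0 D0.
  by field; rewrite rho0 y30 D0.
rewrite /Z2_pt /= eT eS y30 /=; split.
  by apply/andP; split; rewrite /K /D; Z2_closure.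
have -> : (K / D - T1 - T2) / 2 = b * al * be * D^-1 by rewrite /K; field; rewrite D0 F0.
by Z2_closure.
Qed.

Lemma add_pt_Z2 {P Q : pt} : b / 2 \in Z2 ->
  on_curve F a P -> on_curve F a Q -> Z2_pt F rho P -> Z2_pt F rho Q ->
  add_pt F a P Q = None \/
  Z2_pt F rho (add_pt F a P Q) /\
  (tcoord rho (add_pt F a P Q) - tcoord rho P - tcoord rho Q) / 2 \in Z2.
Proof.
move=> b2; case: P Q => [[x1 y1]|] [[x2 y2]|] //= h1 h2.
move=> /and3P[y10 ZT1 ZS1] /and3P[y20 ZT2 ZS2]; have Zb := Z2_of_half b2.
case: eqP => [ex | /eqP nx].
  case: eqP => [_|ny]; [by left | right]; rewrite -{}ex in h2 ZT2 ZS2 *.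
  have ey : y2 = y1.
    by case: (on_curve_same_x F0 h1 h2) => // e; case: ny; rewrite e subrr.
  rewrite {}ey {y20 ZT2 ZS2 h2}.
  set T := x1 / (rho * y1) in ZT1 *; set S := F / (rho ^+ 3 * y1) in ZS1 *.
  have [E0 ZE] : 1 - 2 * b * T * S != 0 /\ (1 - 2 * b * T * S)^-1 \in Z2.
    by apply: (Z2_unit _ (- (b * T * S))); [Z2_closure | ring].
  have [I1 I2] := tangent_formal y10 h1 E0.
  by apply: (formal_third_pt b2 ZT1 ZT1 _ _ I1 I2); Z2_closure.
have [u Zu eu] := model_secant_Z2 b2 ZT1 ZS1 ZT2 ZS2
  (scoord_model y10 h1) (scoord_model y20 h2).
have nT : x1 / (rho * y1) != x2 / (rho * y2).
  apply: contra nx => /eqP eT; apply/eqP; apply: (formal_coords_inj y10 y20 eT).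
  by apply/eqP; rewrite eq_sym -subr_eq0 eu eT subrr mulr0.
have [I1 I2] := chord_formal y10 y20 nx nT h1 h2.
have Zal : (F / (rho ^+ 3 * y2) - F / (rho ^+ 3 * y1)) /
    (x2 / (rho * y2) - x1 / (rho * y1)) \in Z2.
  by rewrite eu mulfK // subr_eq0 eq_sym.
by right; apply: (formal_third_pt b2 ZT1 ZT2 Zal _ I1 I2); Z2_closure.
Qed.

End FormalCoordinates.

Lemma tcoord_neg (rho : rat) (P : pt) : tcoord rho (neg_pt P) = - tcoord rho P.
Proof. by case: P => [[x y]|] /=; rewrite ?oppr0 // mulrN invrN mulrN. Qed.

Section Nontorsion.
Context {F a rho : rat}.
Hypotheses (F0 : F != 0) (rho0 : rho != 0).
Hypothesis b2 : a * rho ^+ 4 / F ^+ 2 / 2 \in Z2.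

Lemma mul_pt_Z2 {P : pt} {m : nat} : on_curve F a P -> Z2_pt F rho P -> (0 < m)%N ->
  (forall j, (0 < j <= m)%N -> mul_pt F a j P <> None) ->
  Z2_pt F rho (mul_pt F a m P) /\
  (tcoord rho (mul_pt F a m P) - m%:R * tcoord rho P) / 2 \in Z2.
Proof.
move=> hP ZP; elim: m => [//|[|m] IHm] _ hne.
  have -> : mul_pt F a 1 P = P by case: P {hP ZP hne IHm} => [[]|].
  by rewrite mul1r subrr mul0r rpred0.
have [Zm Tm] : Z2_pt F rho (mul_pt F a m.+1 P) /\
    (tcoord rho (mul_pt F a m.+1 P) - m.+1%:R * tcoord rho P) / 2 \in Z2.
  by apply: IHm => // j /andP[j0 jm]; apply: hne; rewrite j0 (leqW jm).
case: (add_pt_Z2 F0 rho0 b2 hP (on_curve_mul F0 m.+1 hP) ZP Zm) => [hN | [ZR TR]].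
  by case: (hne m.+2 (leqnn _) hN).
split=> //.
have -> : (tcoord rho (mul_pt F a m.+2 P) - m.+2%:R * tcoord rho P) / 2 =
  (tcoord rho (mul_pt F a m.+2 P) - tcoord rho P - tcoord rho (mul_pt F a m.+1 P)) / 2 +
  (tcoord rho (mul_pt F a m.+1 P) - m.+1%:R * tcoord rho P) / 2.
  by rewrite -[m.+2]addn1 natrD; ring.
exact: rpredD.
Qed.

Lemma Z2_pt_nontorsion {xp yp : rat} :
  on_curve F a (Some (xp, yp)) -> Z2_pt F rho (Some (xp, yp)) ->
  tcoord rho (Some (xp, yp)) = 1 ->
  forall n, (0 < n)%N -> mul_pt F a n (Some (xp, yp)) <> None.
Proof.
move=> hP ZP TP n n0 Pn; set P := Some (xp, yp) in hP ZP TP Pn.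
have yp0 : yp != 0 by case/and3P: ZP.
have exN : exists N, (0 < N)%N && (mul_pt F a N P == None).
  by exists n; rewrite n0 Pn eqxx.
case: (ex_minnP exN) => N /andP[N0 /eqP PN] Nmin.
have below m : (m < N)%N -> forall j, (0 < j <= m)%N -> mul_pt F a j P <> None.
  move=> mN j /andP[j0 jm] /eqP jP; have := Nmin j; rewrite j0 jP => /(_ isT).
  by rewrite leqNgt (leq_ltn_trans jm mN).
have [M eNM] : exists M, N = M.+1 by exists N.-1; rewrite prednK.
have MP : mul_pt F a M P = neg_pt P by apply: add_pt_eq_None; rewrite eNM in PN; exact: PN.
have M0 : (0 < M)%N.
  by rewrite lt0n; apply/eqP => M0; move: MP; rewrite M0.
have [_] := mul_pt_Z2 hP ZP M0 (below M (eq_leq (esym eNM))).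
rewrite MP tcoord_neg TP mulr1 => TM.
have evenN : ~~ odd N.
  apply: half_nat_Z2; rewrite eNM -addn1 natrD.
  have -> : (M%:R + 1%:R) / 2 = - ((- 1 - M%:R) / 2) :> rat by field.
  exact: rpredNr.
have eN : N = (N./2).*2 by rewrite -{1}(odd_double_half N) (negbTE evenN).
set h := N./2 in eN.
have [h0 hN] : (0 < h)%N /\ (h < N)%N by move: N0; rewrite eN -addnn; lia.
have := mul_pt_neg_sym F0 yp0 hP PN (ltnW hN).
have -> : (N - h = h)%N by rewrite {1}eN -addnn addnK.
have [Zh _] := mul_pt_Z2 hP ZP h0 (below h hN).
case: (mul_pt F a h P) Zh => [[x y]|] //= /and3P[y0 _ _] [] /eqP.
by rewrite -subr_eq0 opprK -mulr2n mulrn_eq0 (negbTE y0).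
Qed.

End Nontorsion.

Lemma quartic_increment {x y B : rat} : 0 <= y -> y <= x -> x <= B ->
  x ^+ 4 - y ^+ 4 <= 4 * B ^+ 3 * (x - y).
Proof.
move=> y0 yx xB; have x0 : 0 <= x by lra.
have -> : x ^+ 4 - y ^+ 4 = (x ^+ 3 + x ^+ 2 * y + x * y ^+ 2 + y ^+ 3) * (x - y) by ring.
apply: ler_wpM2r; first by lra.
have le3 (u v w : rat) :
    0 <= u <= B -> 0 <= v <= B -> 0 <= w <= B -> u * v * w <= B * B * B.
  move=> /andP[u0 uB] /andP[v0 vB] /andP[w0 wB].
  by apply: ler_pM => //; [apply: mulr_ge0 | apply: ler_pM].
have hx : 0 <= x <= B by rewrite x0. have hy : 0 <= y <= B by rewrite y0; lra.
have := le3 _ _ _ hx hx hx; have := le3 _ _ _ hx hx hy.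
have := le3 _ _ _ hx hy hy; have := le3 _ _ _ hy hy hy.
have -> : x ^+ 3 + x ^+ 2 * y + x * y ^+ 2 + y ^+ 3 =
  x * x * x + x * x * y + x * y * y + y * y * y by ring.
have -> : B ^+ 3 = B * B * B by ring.
lra.
Qed.

Lemma odd_nat_gt (z : rat) : exists2 q : nat, odd q & z < q%:R.
Proof.
exists (Num.Def.archi_bound `|z|).*2.+1; first by rewrite /= odd_double.
apply: le_lt_trans (ler_norm z) _; apply: lt_le_trans (archi_boundP (normr_ge0 z)) _.
by rewrite ler_nat -addnn ltnW // ltnS leq_addr.
Qed.

Lemma Z2_quartic_between {L U : rat} : 0 <= L -> L < U ->
  exists2 n : rat, n \in Z2 & n != 0 /\ L < n ^+ 4 < U.
Proof.
move=> L0 LU.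
pose B := (Num.Def.archi_bound U).+1.
have UB : U < B%:R.
  by apply: lt_trans (archi_boundP (le_trans L0 (ltW LU))) _; rewrite ltr_nat.
have [q oddq hq] := odd_nat_gt (4 * B%:R ^+ 3 / (U - L)).
have q0 : (0 < q)%N by case: q oddq {hq}.
have q0' : (0 : rat) < q%:R by rewrite ltr0n.
have exk : exists k : nat, L < (k%:R / q%:R) ^+ 4.
  exists (q * B)%N; rewrite natrM mulrAC divff ?gt_eqF // mul1r.
  apply: lt_trans LU (lt_le_trans UB _).
  by rewrite -natrX ler_nat -{1}(expn1 B) leq_pexp2l.
(* k / q is the first point of the grid (1/q) N whose fourth power exceeds L. *)
case: (ex_minnP exk) => k Lk kmin.
have k0 : (0 < k)%N by case: k Lk {kmin} => //; rewrite mul0r expr0n /=; lra.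
have kB : (k%:R / q%:R : rat) <= B%:R.
  rewrite ler_pdivrMr // -natrM ler_nat mulnC; apply: kmin.
  rewrite natrM mulrAC divff ?gt_eqF // mul1r.
  apply: lt_trans LU (lt_le_trans UB _).
  by rewrite -natrX ler_nat -{1}(expn1 B) leq_pexp2l.
have yL : ((k.-1)%:R / q%:R : rat) ^+ 4 <= L.
  by rewrite leNgt; apply/negP => /kmin; rewrite leqNgt ltn_predL k0.
exists (k%:R / q%:R).
  by apply/Z2P; exists k, q; rewrite !pmulrn.
split; first by rewrite mulf_neq0 ?invr_eq0 ?gt_eqF ?ltr0n.
rewrite Lk /=.
have dxy : (k%:R / q%:R - k.-1%:R / q%:R : rat) = q%:R^-1.
  by rewrite -mulrBl -natrB ?leq_pred // -subn1 subKn // mul1r.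
have y0 : (0 : rat) <= k.-1%:R / q%:R by rewrite divr_ge0 ?ler0n.
have yx : (k.-1%:R / q%:R : rat) <= k%:R / q%:R by rewrite -subr_ge0 dxy invr_ge0 ltW.
have := quartic_increment y0 yx kB; rewrite dxy => hinc.
have hq' : 4 * B%:R ^+ 3 * q%:R^-1 < U - L.
  by move: hq; rewrite !ltr_pdivrMr ?subr_gt0 // [_ * q%:R]mulrC.
lra.
Qed.

Lemma dense_quartic_image {k lo : rat} {W : rat -> Prop} : k != 0 ->
  (forall n, n \in Z2 -> n != 0 -> W (k * n ^+ 4 + lo)) ->
  (0 < k -> dense_in W (Some lo) None) /\ (k < 0 -> dense_in W None (Some lo)).
Proof.
move=> k0 hW; split=> hk u v uv /=.
- move=> lu _.
  have L0 : 0 <= (u - lo) / k by apply: divr_ge0; [rewrite subr_ge0 | exact: ltW].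
  have LU : (u - lo) / k < (v - lo) / k by rewrite ltr_pM2r ?invr_gt0 // ltrD2r.
  have [n Zn [n0 /andP[h1 h2]]] := Z2_quartic_between L0 LU.
  exists (k * n ^+ 4 + lo); split; first exact: hW.
  by move: h1 h2; rewrite ltr_pdivrMr // ltr_pdivlMr // => h1 h2; lra.
- move=> _ vl.
  have L0 : 0 <= (v - lo) / k by apply: mulr_le0; [rewrite subr_le0 | rewrite invr_le0 ltW].
  have LU : (v - lo) / k < (u - lo) / k by rewrite ltr_nM2r ?invr_lt0 // ltrD2r.
  have [n Zn [n0 /andP[h1 h2]]] := Z2_quartic_between L0 LU.
  exists (k * n ^+ 4 + lo); split; first exact: hW.
  by move: h1 h2; rewrite ltr_ndivrMr // ltr_ndivlMr // => h1 h2; lra.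
Qed.

Lemma quartic_twist_positive_rank (a t g : rat) : t != 0 -> g != 0 ->
  a * g ^+ 4 / t ^+ 4 / 2 \in Z2 ->
  t ^+ 4 + a * g ^+ 4 != 0 /\ positive_rank (t ^+ 4 + a * g ^+ 4) a.
Proof.
move=> t0 g0 Zw; set w := a * g ^+ 4 / t ^+ 4 / 2 in Zw.
have [W0 ZW] := Z2_unit (1 + 2 * w) w Zw erefl.
have eF : t ^+ 4 + a * g ^+ 4 = t ^+ 4 * (1 + 2 * w) by rewrite /w; field.
set F := t ^+ 4 + a * g ^+ 4 in eF *.
have F0 : F != 0 by rewrite eF mulf_neq0 ?expf_neq0.
have rho0 : t * g != 0 by rewrite mulf_neq0.
have b2 : a * (t * g) ^+ 4 / F ^+ 2 / 2 \in Z2.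
  have -> : a * (t * g) ^+ 4 / F ^+ 2 / 2 = w * ((1 + 2 * w)^-1) ^+ 2.
    have -> : a * (t * g) ^+ 4 = t ^+ 4 * (a * g ^+ 4) by ring.
    have -> : a * g ^+ 4 = 2 * w * t ^+ 4 by rewrite /w; field.
    by rewrite eF; field; rewrite t0 W0.
  by Z2_closure.
have TP : tcoord (t * g) (Some (t ^+ 2 / g ^+ 2, t / g ^+ 3)) = 1.
  by rewrite /=; field; rewrite t0 g0.
have hP : on_curve F a (Some (t ^+ 2 / g ^+ 2, t / g ^+ 3)).
  by rewrite /= /F; field.
have ZP : Z2_pt F (t * g) (Some (t ^+ 2 / g ^+ 2, t / g ^+ 3)).
  rewrite /Z2_pt TP rpred1 mulf_neq0 ?invr_eq0 ?expf_neq0 //=.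
  have -> : F / ((t * g) ^+ 3 * (t / g ^+ 3)) = 1 + 2 * w.
    by rewrite eF; field; rewrite t0 g0.
  by Z2_closure.
split=> //; exists (Some (t ^+ 2 / g ^+ 2, t / g ^+ 3)); split=> //.
exact: (Z2_pt_nontorsion (a := a) (rho := t * g) F0 rho0 b2 hP ZP TP).
Qed.

Lemma fibre_positive_rank (a c d g : rat) : c != 0 -> d != 0 -> g != 0 ->
  a / d * g ^+ 4 / 2 \in Z2 -> a * c ^+ 4 / d ^+ 4 * g ^+ 4 / 2 \in Z2 ->
  let t := (a * g ^+ 4 - d) / c in
  fpoly c d t != 0 /\ positive_rank (fpoly c d t) a.
Proof.
move=> c0 d0 g0 Zv Zu t; set v := a / d * g ^+ 4 / 2 in Zv.
have ea : a * g ^+ 4 = 2 * v * d by rewrite /v; field.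
have [U0 ZU] : 1 - 2 * v != 0 /\ (1 - 2 * v)^-1 \in Z2.
  by apply: (Z2_unit _ (- v)); [Z2_closure | ring].
have et : t = - (d * (1 - 2 * v)) / c by rewrite /t ea; field.
have t0 : t != 0 by rewrite et mulf_neq0 ?invr_eq0 // oppr_eq0 mulf_neq0.
have -> : fpoly c d t = t ^+ 4 + a * g ^+ 4 by rewrite /fpoly /t; field.
apply: quartic_twist_positive_rank t0 g0 _.
have -> : a * g ^+ 4 / t ^+ 4 / 2 =
    a * c ^+ 4 / d ^+ 4 * g ^+ 4 / 2 * ((1 - 2 * v)^-1) ^+ 4.
  have -> : a * c ^+ 4 / d ^+ 4 * g ^+ 4 = c ^+ 4 / d ^+ 4 * (a * g ^+ 4) by ring.
  by rewrite ea et; field; rewrite U0 d0 c0.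
by Z2_closure.
Qed.

Lemma quartic_clearing (K1 K2 : rat) : exists2 M : rat, M != 0 &
  forall n, n \in Z2 -> K1 * (M * n) ^+ 4 / 2 \in Z2 /\ K2 * (M * n) ^+ 4 / 2 \in Z2.
Proof.
pose D1 : rat := (denq K1)%:~R; pose D2 : rat := (denq K2)%:~R.
have ZD1 : D1 \in Z2 by exact: rpred_int.
have ZD2 : D2 \in Z2 by exact: rpred_int.
have ZK1 := Z2_mul_denq K1; have ZK2 := Z2_mul_denq K2.
exists (2 * D1 * D2); first by rewrite !mulf_neq0 ?intr_eq0 ?denq_neq0.
move=> n Zn; split.
- have -> : K1 * (2 * D1 * D2 * n) ^+ 4 / 2 = K1 * D1 * (8 * D1 ^+ 3 * D2 ^+ 4 * n ^+ 4).
    by field.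
  by Z2_closure.
- have -> : K2 * (2 * D1 * D2 * n) ^+ 4 / 2 = K2 * D2 * (8 * D1 ^+ 4 * D2 ^+ 3 * n ^+ 4).
    by field.
  by Z2_closure.
Qed.

Theorem corollary4p3 (a c d : rat) (ha : a != 0) (hc : c != 0) (hd : d != 0) :
  exists W : rat -> Prop,
    (0 < a * c -> dense_in W (Some (- d / c)) None) /\
    (a * c < 0 -> dense_in W None (Some (- d / c))) /\
    (forall t, W t -> fpoly c d t != 0 /\ positive_rank (fpoly c d t) a).
Proof.
have [M M0 ZM] := quartic_clearing (a * c ^+ 4 / d ^+ 4) (a / d).
pose W t := exists2 n, n \in Z2 & n != 0 /\ t = (a * (M * n) ^+ 4 - d) / c.
exists W.
have k0 : a * M ^+ 4 / c != 0 by rewrite mulf_neq0 ?invr_eq0 // mulf_neq0 // expf_neq0.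
have hW n : n \in Z2 -> n != 0 -> W (a * M ^+ 4 / c * n ^+ 4 + - d / c).
  by move=> Zn n0; exists n => //; split => //; field.
have [Wpos Wneg] := dense_quartic_image k0 hW.
have sgn : a * M ^+ 4 / c = a * c * (M ^+ 4 / c ^+ 2) by field.
have M4c : 0 < M ^+ 4 / c ^+ 2 by rewrite divr_gt0 // exprn_even_gt0.
split; first by move=> hac; apply: Wpos; rewrite sgn mulr_gt0.
split; first by move=> hac; apply: Wneg; rewrite sgn pmulr_llt0.
move=> _ [n Zn [n0 ->]]; have [ZK1 ZK2] := ZM n Zn.
by apply: fibre_positive_rank; rewrite // mulf_neq0.
Qed.
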